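(* Let $v=q_1q_2\cdots q_s$ be the factorization of $v\ge2$ into powers of distinct primes, and let $k=\min\{q_i:1\le i\le s\}$. Let $t,d$ be positive integers with $q_i>t+1$ for all $i$ and $d+1\le v$. Then an optimum $(d,t)$-CDA$((d+1)v^t;k+t-1,v)$ exists.
   Context: Consecutive $t$-way interaction in an $N\times k$ array $A=(a_{ij})$ over a $v$-set $V$: $T=\{(i,x_i),\dots,(i+t-1,x_{i+t-1})\}$, $1\le i\le k-t+1$, $x_r\in V$; $\rho(A,T)=\{r: a_{r,j}=x_j\ \forall (j,x_j)\in T\}$, $\rho(A,\mathcal T)=\bigcup_{T\in\mathcal T}\rho(A,T)$. A $(d,t)$-CDA$(N;k,v)$ is an $N\times k$ array over $V$ in which every $t$ consecutive columns contain every $t$-tuple at least once, and such that for every set $\mathcal T$ of exactly $d$ distinct consecutive $t$-way interactions and every consecutive $t$-way interaction $T$: $\rho(A,T)\subseteq\rho(A,\mathcal T)$ iff $T\in\mathcal T$. It is optimum if $N=(d+1)v^t$. *)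

From mathcomp Require Import all_boot.
Set Implicit Arguments. Unset Strict Implicit. Unset Printing Implicit Defensive.

Definition array (N k v : nat) := 'I_N -> 'I_k -> 'I_v.

(* A candidate consecutive t-way interaction: a starting column i (0-based)
   together with the t values x_0..x_{t-1} placed in columns i..i+t-1,
   i.e. the set {(i+j, x_j) : j < t}. *)
Definition interaction (k v t : nat) := ('I_k * t.-tuple 'I_v)%type.

Definition valid_int (k v t : nat) (T : interaction k v t) : bool :=
  T.1 + t <= k.

Definition rho (N k v t : nat) (A : array N k v) (T : interaction k v t)
  : {set 'I_N} :=
  [set r | [forall j : 'I_t, [exists c : 'I_k,
             (val c == T.1 + j) && (A r c == tnth T.2 j)]]].

Definition rhoS (N k v t : nat) (A : array N k v)
  (S : {set interaction k v t}) : {set 'I_N} :=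
  \bigcup_(T in S) rho A T.

Definition is_CDA (d t N k v : nat) (A : array N k v) : Prop :=
  (forall T : interaction k v t, valid_int T -> rho A T != set0) /\
  (forall S : {set interaction k v t},
     (forall T, T \in S -> valid_int T) -> #|S| = d ->
     forall T : interaction k v t, valid_int T ->
       (rho A T \subset rhoS A S <-> T \in S)).

Definition is_optimum_CDA (d t N k v : nat) (A : array N k v) : Prop :=
  is_CDA d t A /\ N = (d + 1) * v ^ t.

Definition min_prime_power (v : nat) : nat :=
  \big[minn/v]_(p <- primes v) v`_p.

From mathcomp Require Import all_boot all_algebra all_field zify.
Set Implicit Arguments. Unset Strict Implicit. Unset Printing Implicit Defensive.

(* Let q = min_i q_i.  Take as alphabet V = 'I_v and fix an evaluation
   scheme E h c j in V, for "lower coefficients" h : V^t, a "leading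
   coefficient" c in V and q points j, which is INTERPOLATING: for fixed c
   any t points determine h, and any t+1 points determine (h, c).  Over a
   field with at least q elements, E h c j = (sum_i h_i X^i + c X^t)(a_j)
   works; products of schemes are interpolating, and so the Chinese
   decomposition v = q_1 ... q_s yields a scheme on 'I_v since every q_i
   is a prime power at least q.

   The array has one row for every pair (h, l) with l <= d, and column
   n < q + t - 1 of row (h, l) holds E h l (n mod q).  Every consecutive
   window of t <= q columns reads t distinct points, so each interaction
   is covered once on every level l: #rho(T) >= d + 1.  Two distinct
   interactions share at most one row: with the same start they are
   disjoint, with different starts their windows span t + 1 distinct
   points (as t < q), which fix the row.  A general counting criterion
   (CDA_of_small_overlaps) then yields the detecting property. *)

Definition interpolating (V : finType) (q t : nat)
    (E : {ffun 'I_t -> V} -> V -> 'I_q -> V) : Prop :=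
  (forall c (s : 'I_t -> 'I_q), injective s ->
     injective (fun h => [ffun i => E h c (s i)])) /\
  (forall s : 'I_t.+1 -> 'I_q, injective s -> forall h c h' c',
     (forall i, E h c (s i) = E h' c' (s i)) -> (h, c) = (h', c')).

Section FieldScheme.
Import GRing.Theory.
Local Open Scope ring_scope.

Lemma poly_eq0_at_points (F : fieldType) m (x : 'I_m -> F) (p : {poly F}) :
  injective x -> (size p <= m)%N -> (forall j, root p (x j)) -> p = 0.
Proof.
move=> x_inj size_p p_x.
apply: (@roots_geq_poly_eq0 _ _ [seq x j | j <- enum 'I_m]).
- by apply/allP => _ /mapP [j _ ->].
- by rewrite map_inj_uniq ?enum_uniq.
- by rewrite size_map size_enum_ord.
Qed.

Variables (F : finFieldType) (q t : nat) (a : 'I_q -> F).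
Hypothesis a_inj : injective a.

Definition low_poly (h : {ffun 'I_t -> F}) : {poly F} :=
  \poly_(n < t) (if insub n is Some i then h i else 0).

Lemma size_low_poly h : (size (low_poly h) <= t)%N.
Proof. exact: size_poly. Qed.

Lemma low_poly_inj : injective low_poly.
Proof.
move=> h h' eq_hh'; apply/ffunP => i.
by have := congr1 (fun p : {poly F} => p`_i) eq_hh'; rewrite !coef_poly ltn_ord valK.
Qed.

Definition field_scheme (h : {ffun 'I_t -> F}) (c : F) (j : 'I_q) : F :=
  (low_poly h + c *: 'X^t).[a j].

Lemma field_scheme_interpolating : interpolating field_scheme.
Proof.
split=> [c s s_inj h h' /ffunP eq_vals | s s_inj h c h' c' eq_vals].
- apply: low_poly_inj; apply/eqP; rewrite -subr_eq0; apply/eqP.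
  apply: (@poly_eq0_at_points _ _ (a \o s)) => [x y /a_inj/s_inj //||j].
    by rewrite (leq_trans (size_polyD _ _)) // geq_max size_polyN !size_low_poly.
  have := eq_vals j; rewrite !ffunE /field_scheme !hornerE => /addIr eq_j.
  by rewrite /root !hornerE eq_j subrr.
- set p := low_poly h - low_poly h' + (c - c') *: 'X^t.
  have size_p : (size p <= t.+1)%N.
    rewrite (leq_trans (size_polyD _ _)) // geq_max.
    rewrite (leq_trans (size_scale_leq _ _)) ?size_polyXn // andbT.
    by rewrite (leq_trans (size_polyD _ _)) // geq_max size_polyN !(leq_trans (size_low_poly _)).
  have p0 : p = 0.
    apply: (@poly_eq0_at_points _ _ (a \o s)) => [x y /a_inj/s_inj //|//|j].
    have := eq_vals j; rewrite /field_scheme /root /p !hornerE /= => eq_j.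
    by rewrite mulrBl addrACA eq_j -opprD subrr.
  have cc' : c = c'.
    have := congr1 (fun r : {poly F} => r`_t) p0.
    rewrite /p !coefD coefN coefZ coefXn eqxx mulr1 coef0.
    rewrite !nth_default ?size_low_poly // subrr add0r => /eqP.
    by rewrite subr_eq0 => /eqP.
  move: p0; rewrite /p cc' subrr scale0r addr0 => /eqP.
  by rewrite subr_eq0 => /eqP /low_poly_inj ->.
Qed.

End FieldScheme.

Definition card_equiv (V W : finType) (e : #|V| = #|W|) (x : V) : W :=
  enum_val (cast_ord e (enum_rank x)).

Lemma card_equivK (V W : finType) (e : #|V| = #|W|) :
  cancel (card_equiv e) (card_equiv (esym e)).
Proof. by move=> x; rewrite /card_equiv enum_valK cast_ordK enum_rankK. Qed.

Lemma card_equivKV (V W : finType) (e : #|V| = #|W|) :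
  cancel (card_equiv (esym e)) (card_equiv e).
Proof. by move=> y; rewrite /card_equiv enum_valK cast_ordKV enum_rankK. Qed.

Lemma interpolating_transport (V W : finType) q t
    (E : {ffun 'I_t -> V} -> V -> 'I_q -> V) :
  #|V| = #|W| -> interpolating E ->
  exists E' : {ffun 'I_t -> W} -> W -> 'I_q -> W, interpolating E'.
Proof.
move=> e [E_lo E_all]; set f := card_equiv e; set g := card_equiv (esym e).
have f_inj : injective f := can_inj (card_equivK e).
have g_inj : injective g := can_inj (card_equivKV e).
have gffun_inj : injective (fun h : {ffun 'I_t -> W} => [ffun i => g (h i)]).
  by move=> h h' /ffunP eq_h; apply/ffunP => i; apply: g_inj; have := eq_h i; rewrite !ffunE.
exists (fun h c j => f (E [ffun i => g (h i)] (g c) j)); split.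
- move=> c s s_inj h h' /ffunP eq_vals; apply: gffun_inj.
  apply: (E_lo (g c) s s_inj); apply/ffunP => i.
  by have := eq_vals i; rewrite !ffunE => /f_inj.
- move=> s s_inj h c h' c' eq_vals.
  have eq_E i := f_inj _ _ (eq_vals i).
  by case: (E_all s s_inj _ _ _ _ eq_E) => /gffun_inj -> /g_inj ->.
Qed.

(* The componentwise product of two interpolating schemes is interpolating;
   this is the Chinese-remainder step of the construction. *)
Lemma interpolating_prod (V1 V2 : finType) q t
    (E1 : {ffun 'I_t -> V1} -> V1 -> 'I_q -> V1)
    (E2 : {ffun 'I_t -> V2} -> V2 -> 'I_q -> V2) :
  interpolating E1 -> interpolating E2 ->
  interpolating (fun (h : {ffun 'I_t -> V1 * V2}) (c : V1 * V2) j =>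
    (E1 [ffun i => (h i).1] c.1 j, E2 [ffun i => (h i).2] c.2 j)).
Proof.
move=> [E1_lo E1_all] [E2_lo E2_all].
have split_eq (h h' : {ffun 'I_t -> V1 * V2}) :
    [ffun i => (h i).1] = [ffun i => (h' i).1] ->
    [ffun i => (h i).2] = [ffun i => (h' i).2] -> h = h'.
  move=> /ffunP eq1 /ffunP eq2; apply/ffunP => i.
  by have := eq1 i; have := eq2 i; rewrite !ffunE; case: (h i) (h' i) => ? ? [? ?] /= -> ->.
split.
- move=> c s s_inj h h' /ffunP eq_vals; apply: split_eq.
  + apply: (E1_lo c.1 s s_inj); apply/ffunP => i.
    by have := eq_vals i; rewrite !ffunE => -[].
  + apply: (E2_lo c.2 s s_inj); apply/ffunP => i.
    by have := eq_vals i; rewrite !ffunE => -[].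
- move=> s s_inj h c h' c' eq_vals.
  case: (E1_all s s_inj _ _ _ _ (fun i => congr1 fst (eq_vals i))) => eq1 eq_c1.
  case: (E2_all s s_inj _ _ _ _ (fun i => congr1 snd (eq_vals i))) => eq2 eq_c2.
  by rewrite (split_eq h h' eq1 eq2) (surjective_pairing c) eq_c1 eq_c2 -surjective_pairing.
Qed.

Lemma interpolating_unit q t :
  interpolating (fun (_ : {ffun 'I_t -> 'I_1}) (_ : 'I_1) (_ : 'I_q) => ord0).
Proof.
have ffun1 (h h' : {ffun 'I_t -> 'I_1}) : h = h' by apply/ffunP => i; rewrite !ord1.
split=> [c s _ h h' _ | s _ h c h' c' _]; first exact: ffun1.
by rewrite (ffun1 h h') (ord1 c) (ord1 c').
Qed.

(* A field with p ^ m >= q elements provides q distinct evaluation points. *)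
Lemma interpolating_prime_power q t p m : prime p -> 0 < m -> q <= p ^ m ->
  exists E : {ffun 'I_t -> 'I_(p ^ m)} -> 'I_(p ^ m) -> 'I_q -> 'I_(p ^ m),
    interpolating E.
Proof.
move=> p_pr m_gt0 q_le; have [F _ card_F] := pPrimePowerField p_pr m_gt0.
have q_le_F : q <= #|F| by rewrite card_F.
pose a (j : 'I_q) : F := enum_val (widen_ord q_le_F j).
have a_inj : injective a by move=> x y /enum_val_inj /(congr1 val) /= /val_inj.
apply: (interpolating_transport _ (field_scheme_interpolating t a_inj)).
by rewrite card_F card_ord.
Qed.

(* An interpolating scheme on q points exists over 'I_n as soon as every
   prime-power part of n is at least q; induction peels off the part of
   the smallest prime divisor. *)
Lemma interpolating_exists q t n : 0 < n ->
  (forall p, p \in primes n -> q <= n`_p) ->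
  exists E : {ffun 'I_t -> 'I_n} -> 'I_n -> 'I_q -> 'I_n, interpolating E.
Proof.
elim/ltn_ind: n => n IH n_gt0 q_parts.
have [n_le1|n_gt1] := leqP n 1.
  have -> : n = 1 by lia.
  by exists (fun _ _ _ => ord0); exact: interpolating_unit.
set p := pdiv n; have p_pr : prime p := pdiv_prime n_gt1.
have p_n : p \in primes n by rewrite mem_primes p_pr n_gt0 pdiv_dvd.
have np_gt1 : 1 < n`_p by rewrite p_part_gt1.
have [E1 E1_interp] : exists E : {ffun 'I_t -> 'I_(n`_p)} -> _ -> 'I_q -> _,
    interpolating E.
  rewrite p_part; apply: interpolating_prime_power => //.
    by rewrite logn_gt0.
  by rewrite -p_part; exact: q_parts.
have [E2 E2_interp] : exists E : {ffun 'I_t -> 'I_(n`_p^')} -> _ -> 'I_q -> _,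
    interpolating E.
  apply: IH; first by rewrite -{2}(partnC p n_gt0) -[X in X < _]mul1n ltn_pmul2r ?part_gt0.
    exact: part_gt0.
  move=> r; rewrite primes_part mem_filter => /andP [r_p' r_n].
  by rewrite partn_part => [|x /eqP ->]; [exact: q_parts | exact: r_p'].
apply: (interpolating_transport _ (interpolating_prod E1_interp E2_interp)).
by rewrite card_prod !card_ord partnC.
Qed.

Lemma modn_wrap q n : n < q + q -> n %% q = if n < q then n else n - q.
Proof.
case: ifP => [/modn_small //|/negbT]; rewrite -leqNgt => q_le_n n_lt.
by rewrite -{1}(subnK q_le_n) modnDr modn_small //; lia.
Qed.

Lemma window_inj q t i j1 j2 : t <= q -> i < q -> j1 < t -> j2 < t ->
  (i + j1) %% q = (i + j2) %% q -> j1 = j2.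
Proof.
move=> t_le i_lt j1_lt j2_lt; rewrite !modn_wrap; try lia.
by repeat case: ifP => [|/negbT] ?; lia.
Qed.

Lemma window_fresh q t i i' : 0 < t -> t < q -> i < q -> i' < q -> i != i' ->
  exists2 j', j' < t & forall j, j < t -> (i' + j') %% q != (i + j) %% q.
Proof.
move=> t_gt0 t_lt i_lt i'_lt /eqP i_neq.
have fresh j' : j' < t ->
    (forall j, j < t -> i' + j' != i + j /\ i' + j' != i + j + q /\ i' + j' + q != i + j) ->
  exists2 j', j' < t & forall j, j < t -> (i' + j') %% q != (i + j) %% q.
  move=> j'_lt far; exists j' => // j j_lt; rewrite !modn_wrap; try lia.
  have [? [? ?]] := far j j_lt; by repeat case: ifP => [|/negbT] ?; lia.
have [i'_lt_i|i_le_i'] := ltnP i' i.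
- have [gap_lt|gap_ge] := ltnP (i' + q - i) t.
  + by apply: (fresh (t - (i' + q - i))) => [|j j_lt]; lia.
  + by apply: (fresh 0) => // j j_lt; lia.
- have [gap_lt|gap_ge] := ltnP (i' - i) t.
  + by apply: (fresh (t - (i' - i))) => [|j j_lt]; lia.
  + by apply: (fresh 0) => // j j_lt; lia.
Qed.

Lemma rhoP N k v t (A : array N k v) (T : interaction k v t) r : valid_int T ->
  reflect (forall (j : 'I_t) (c : 'I_k), val c = T.1 + j -> A r c = tnth T.2 j)
          (r \in rho A T).
Proof.
move=> T_valid; rewrite inE; apply: (iffP forallP) => [cover j c c_j | match_T j].
- have /existsP [c' /andP [/eqP c'_j /eqP <-]] := cover j.
  by congr (A r _); apply: val_inj; rewrite c_j c'_j.
- have col_j : T.1 + j < k by move: T_valid (ltn_ord j); rewrite /valid_int; lia.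
  by apply/existsP; exists (Ordinal col_j); rewrite (match_T j) ?eqxx.
Qed.

Lemma card_bigcup_le (I T : finType) (P : pred I) (F : I -> {set T}) :
  #|\bigcup_(i | P i) F i| <= \sum_(i | P i) #|F i|.
Proof.
apply: (big_ind2 (fun (X : {set T}) n => #|X| <= n)); first by rewrite cards0.
  by move=> X1 X2 n1 n2 le1 le2; rewrite (leq_trans (leq_card_setU _ _)) ?leq_add.
by [].
Qed.

Lemma CDA_of_small_overlaps d t N k v (A : array N k v) :
  (forall T : interaction k v t, valid_int T -> d < #|rho A T|) ->
  (forall T T' : interaction k v t, valid_int T -> valid_int T' -> T != T' ->
     #|rho A T :&: rho A T'| <= 1) ->
  is_CDA d t A.
Proof.
move=> rho_big overlap; split=> [T /rho_big|S S_valid card_S T T_valid].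
  by rewrite -card_gt0; apply: leq_ltn_trans.
split=> [rho_sub|T_S]; last exact: (bigcup_sup _ T_S).
apply/negPn/negP => T_notin_S; have := rho_big T T_valid; rewrite ltnNge => /negP[].
have cover : rho A T \subset \bigcup_(T' in S) (rho A T :&: rho A T').
  apply/subsetP => r r_T; have /bigcupP [T' T'_S r_T'] := subsetP rho_sub r r_T.
  by apply/bigcupP; exists T' => //; rewrite inE r_T r_T'.
rewrite (leq_trans (subset_leq_card cover)) // (leq_trans (card_bigcup_le _ _)) //.
rewrite -card_S -sum1_card leq_sum // => T' T'_S; apply: overlap (S_valid T' T'_S) _ => //.
by apply/eqP => eq_T; rewrite eq_T T'_S in T_notin_S.
Qed.

Section CyclicArray.
Variables (v t d q : nat) (E : {ffun 'I_t -> 'I_v} -> 'I_v -> 'I_q -> 'I_v).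
Hypotheses (E_interp : interpolating E) (t_gt0 : 0 < t) (t_lt_q : t < q)
  (levels_le : d + 1 <= v).

Let q_gt0 : 0 < q := leq_ltn_trans (leq0n t) t_lt_q.

Definition point (n : nat) : 'I_q := Ordinal (ltn_pmod n q_gt0).

Local Notation Row := ({ffun 'I_t -> 'I_v} * 'I_(d + 1))%type.

Definition row_entry (x : Row) (n : nat) : 'I_v :=
  E x.1 (widen_ord levels_le x.2) (point n).

Lemma card_rows : #|'I_((d + 1) * v ^ t)| = #|{: Row}|.
Proof. by rewrite card_ord card_prod card_ffun !card_ord mulnC. Qed.

Definition row_of : 'I_((d + 1) * v ^ t) -> Row := card_equiv card_rows.

Definition cyclic_array : array ((d + 1) * v ^ t) (q + t - 1) v :=
  fun r c => row_entry (row_of r) c.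

Lemma valid_start (T : interaction (q + t - 1) v t) : valid_int T -> T.1 < q.
Proof. by rewrite /valid_int; lia. Qed.

Lemma window_point_inj (T : interaction (q + t - 1) v t) :
  valid_int T -> injective (fun j : 'I_t => point (T.1 + j)).
Proof.
move=> /valid_start T_start j1 j2 /(congr1 val) /= eq_mod; apply: val_inj.
exact: window_inj (ltnW t_lt_q) T_start (ltn_ord j1) (ltn_ord j2) eq_mod.
Qed.

Lemma mem_rho_cyclic (T : interaction (q + t - 1) v t) r : valid_int T ->
  (r \in rho cyclic_array T) <-> (forall j : 'I_t, row_entry (row_of r) (T.1 + j) = tnth T.2 j).
Proof.
move=> T_valid; split=> [/(rhoP _ _ T_valid) match_T j | match_T].
- have col_j : T.1 + j < q + t - 1 by move: T_valid (ltn_ord j); rewrite /valid_int; lia.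
  exact: (match_T j (Ordinal col_j)).
- by apply/(rhoP _ _ T_valid) => j c c_j; rewrite /cyclic_array c_j.
Qed.

Lemma rho_cyclic_levels (T : interaction (q + t - 1) v t) (l : 'I_(d + 1)) :
  valid_int T -> exists2 r, r \in rho cyclic_array T & (row_of r).2 = l.
Proof.
move=> T_valid; have [E_lo _] := E_interp.
have vals_inj := E_lo (widen_ord levels_le l) _ (window_point_inj T_valid).
pose h := invF vals_inj [ffun j => tnth T.2 j].
pose r := card_equiv (esym card_rows) (h, l).
have row_r : row_of r = (h, l) by rewrite /row_of card_equivKV.
exists r; last by rewrite row_r.
apply/mem_rho_cyclic => // j; rewrite row_r.
by have /ffunP/(_ j) := f_invF vals_inj [ffun j => tnth T.2 j]; rewrite !ffunE.
Qed.

Lemma card_rho_cyclic (T : interaction (q + t - 1) v t) :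
  valid_int T -> d < #|rho cyclic_array T|.
Proof.
move=> T_valid; suff : #|[set: 'I_(d + 1)]| <= #|rho cyclic_array T|.
  by rewrite cardsT card_ord; apply: leq_trans; rewrite addn1.
apply: (leq_trans _ (leq_imset_card (fun r => (row_of r).2) _)).
apply/subset_leq_card/subsetP => l _.
by have [r r_T <-] := rho_cyclic_levels l T_valid; apply: imset_f.
Qed.

Lemma row_of_inj : injective row_of.
Proof. exact: can_inj (card_equivK card_rows). Qed.

Lemma rho_cyclic_same_start (T T' : interaction (q + t - 1) v t) r :
  valid_int T -> valid_int T' -> T.1 = T'.1 ->
  r \in rho cyclic_array T -> r \in rho cyclic_array T' -> T = T'.
Proof.
move=> T_valid T'_valid same_start /(mem_rho_cyclic _ T_valid) r_T.
move=> /(mem_rho_cyclic _ T'_valid) r_T'.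
apply: injective_projections => //; apply: eq_from_tnth => j.
by rewrite -r_T -r_T' same_start.
Qed.

(* Interactions with distinct starts share at most one row: together they
   read t + 1 distinct points, which determine the row. *)
Lemma rho_cyclic_shifted_start (T T' : interaction (q + t - 1) v t) r1 r2 :
  valid_int T -> valid_int T' -> T.1 != T'.1 ->
  r1 \in rho cyclic_array T -> r1 \in rho cyclic_array T' ->
  r2 \in rho cyclic_array T -> r2 \in rho cyclic_array T' -> r1 = r2.
Proof.
move=> T_valid T'_valid shift; rewrite !mem_rho_cyclic // => r1_T r1_T' r2_T r2_T'.
have [j' j'_lt fresh] :=
  window_fresh t_gt0 t_lt_q (valid_start T_valid) (valid_start T'_valid) shift.
pose col (i : 'I_t.+1) := if i < t then T.1 + i else T'.1 + j'.
have col_inj : injective (fun i => point (col i)).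
  move=> a b /(congr1 val) /=; rewrite /col.
  case: (ltnP a t) => [a_lt|a_ge]; case: (ltnP b t) => [b_lt|b_ge] eq_mod.
  - apply: val_inj.
    exact: window_inj (ltnW t_lt_q) (valid_start T_valid) a_lt b_lt eq_mod.
  - by have := fresh a a_lt; rewrite eq_mod eqxx.
  - by have := fresh b b_lt; rewrite eq_mod eqxx.
  - by apply: ord_inj; move: (ltn_ord a) (ltn_ord b) a_ge b_ge; lia.
have agree i : row_entry (row_of r1) (col i) = row_entry (row_of r2) (col i).
  rewrite /col; case: (ltnP i t) => [i_lt|_].
  - by have := r1_T (Ordinal i_lt); have := r2_T (Ordinal i_lt); rewrite /= => -> ->.
  - by have := r1_T' (Ordinal j'_lt); have := r2_T' (Ordinal j'_lt); rewrite /= => -> ->.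
have [_ E_all] := E_interp.
case: (E_all _ col_inj _ _ _ _ agree) => eq_h eq_l.
by apply: row_of_inj; apply: injective_projections => //; apply: ord_inj.
Qed.

Lemma card_rho_cyclic_overlap (T T' : interaction (q + t - 1) v t) :
  valid_int T -> valid_int T' -> T != T' ->
  #|rho cyclic_array T :&: rho cyclic_array T'| <= 1.
Proof.
move=> T_valid T'_valid T_neq; apply/card_le1_eqP => r1 r2.
rewrite !in_setI => /andP [r1_T r1_T'] /andP [r2_T r2_T'].
have [same|shift] := eqVneq T.1 T'.1.
  by rewrite (rho_cyclic_same_start T_valid T'_valid same r1_T r1_T') eqxx in T_neq.
exact: rho_cyclic_shifted_start T_valid T'_valid shift r2_T r2_T' r1_T r1_T'.
Qed.

End CyclicArray.

Lemma min_prime_power_le v p : p \in primes v -> min_prime_power v <= v`_p.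
Proof.
rewrite /min_prime_power; elim: (primes v) => // p' s IH.
rewrite inE big_cons => /orP [/eqP -> | /IH]; first exact: geq_minl.
exact: leq_trans (geq_minr _ _).
Qed.

Lemma min_prime_power_gt v b : 1 < v -> (forall p, p \in primes v -> b < v`_p) ->
  b < min_prime_power v.
Proof.
move=> v_gt1 parts_gt; rewrite /min_prime_power big_seq.
apply: (big_ind (fun m => b < m)) => [|m1 m2 ? ?|p p_v]; last exact: parts_gt.
- have pdiv_v : pdiv v \in primes v.
    by rewrite mem_primes pdiv_prime // (ltnW v_gt1) pdiv_dvd.
  exact: leq_trans (parts_gt _ pdiv_v) (dvdn_leq (ltnW v_gt1) (dvdn_part _ _)).
- by rewrite leq_min; apply/andP.
Qed.

Theorem mainTheorem10 (v t d : nat) :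
  2 <= v -> 0 < t -> 0 < d ->
  (forall p, p \in primes v -> t + 1 < v`_p) ->
  d + 1 <= v ->
  exists A : array ((d + 1) * v ^ t) (min_prime_power v + t - 1) v,
    is_optimum_CDA d t A.
Proof.
move=> v_ge2 t_gt0 _ parts_gt levels_le.
have t_lt_q : t < min_prime_power v.
  by apply: ltnW; rewrite -addn1; exact: min_prime_power_gt.
have [E E_interp] : exists E : {ffun 'I_t -> 'I_v} -> 'I_v -> 'I_(min_prime_power v) -> 'I_v,
    interpolating E.
  by apply: interpolating_exists => [|p]; [lia | exact: min_prime_power_le].
exists (cyclic_array E t_lt_q levels_le); split => //.
apply: CDA_of_small_overlaps => [T | T T'].
- exact: card_rho_cyclic.
- exact: card_rho_cyclic_overlap.
Qed.
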